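(* Let $\mathfrak{P}_1=(\rho^{(1)}_{t_0},\mathcal{E}^{(1)}_{t_1\leftarrow t_0},\dots,\mathcal{E}^{(1)}_{t_n\leftarrow t_{n-1}})$ and $\mathfrak{P}_2=(\rho^{(2)}_{t_0},\mathcal{E}^{(2)}_{t_1\leftarrow t_0},\dots,\mathcal{E}^{(2)}_{t_n\leftarrow t_{n-1}})$ be multi-time quantum processes, with measurements $\{\Pi^{(1),t_k}_{b}\}$ and $\{\Pi^{(2),t_k}_{c}\}$ respectively, and let $\mathfrak{P}_1\otimes\mathfrak{P}_2$ be the process with initial state $\rho^{(1)}_{t_0}\otimes\rho^{(2)}_{t_0}$, channels $\mathcal{E}^{(1)}_{t_j\leftarrow t_{j-1}}\otimes\mathcal{E}^{(2)}_{t_j\leftarrow t_{j-1}}$, and product measurements $\{\Pi^{(1),t_k}_{b}\otimes\Pi^{(2),t_k}_{c}\}_{b,c}$. Then $$\mathcal{N}\big(\overrightarrow{Q}_{\rm KD}(\mathfrak{P}_1\otimes\mathfrak{P}_2)\big)=\mathcal{N}\big(\overrightarrow{Q}_{\rm KD}(\mathfrak{P}_1)\big)\mathcal{N}\big(\overrightarrow{Q}_{\rm KD}(\mathfrak{P}_2)\big)+\mathcal{N}\big(\overrightarrow{Q}_{\rm KD}(\mathfrak{P}_1)\big)+\mathcal{N}\big(\overrightarrow{Q}_{\rm KD}(\mathfrak{P}_2)\big),$$ and, with $\mathcal{N}'[Q]=\log\sum|Q|$, $$\mathcal{N}'\big(\overrightarrow{Q}_{\rm KD}(\mathfrak{P}_1\otimes\mathfrak{P}_2)\big)=\mathcal{N}'\big(\overrightarrow{Q}_{\rm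 KD}(\mathfrak{P}_1)\big)+\mathcal{N}'\big(\overrightarrow{Q}_{\rm KD}(\mathfrak{P}_2)\big).$$ The same holds for the left and doubled temporal KD distributions.
   Context: A multi-time quantum process $(\rho_{t_0},\mathcal{E}_{t_1\leftarrow t_0},\dots,\mathcal{E}_{t_n\leftarrow t_{n-1}})$ consists of a density operator and CPTP maps on finite-dimensional spaces, extended linearly to all operators; complete families of orthogonal projectors are fixed at each time. $\overrightarrow{Q}_{\rm KD}(b_n,\dots,b_0)=\operatorname{Tr}[\mathcal{E}_{t_n\leftarrow t_{n-1}}(\cdots\mathcal{E}_{t_1\leftarrow t_0}(\rho_{t_0}\Pi^{t_0}_{b_0})\Pi^{t_1}_{b_1}\cdots)\Pi^{t_n}_{b_n}]$; $\overleftarrow{Q}_{\rm KD}(a_n,\dots,a_0)=\operatorname{Tr}[\Pi^{t_n}_{a_n}\mathcal{E}_{t_n\leftarrow t_{n-1}}(\cdots\Pi^{t_1}_{a_1}\mathcal{E}_{t_1\leftarrow t_0}(\Pi^{t_0}_{a_0}\rho_{t_0})\cdots)]$; $\overleftrightarrow{Q}_{\rm KD}(a;b)=\operatorname{Tr}[\Pi^{t_n}_{a_n}\mathcal{E}_{t_n\leftarrow t_{n-1}}(\cdots\Pi^{t_1}_{a_1}\mathcal{E}_{t_1\leftarrow t_0}(\Pi^{t_0}_{a_0}\rho_{t_0}\Pi^{t_0}_{b_0})\Pi^{t_1}_{b_1}\cdots)\Pi^{t_n}_{b_n}]$. For any such distribution $Q$, $\mathcal{N}[Q]=\sum_{\text{all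 outcomes}}|Q|-1$. *)

From HB Require Import structures.
From mathcomp Require Import all_boot all_order all_algebra.
From mathcomp Require Import reals exp.
From mathcomp.real_closed Require Import complex mxtens.

Set Implicit Arguments.
Unset Strict Implicit.
Unset Printing Implicit Defensive.

Import Order.TTheory GRing.Theory Num.Theory.
Local Open Scope ring_scope.

Section QProc.
Variable R : realType.
Local Notation C := R[i].

Definition adjmx {m n} (A : 'M[C]_(m, n)) : 'M[C]_(n, m) := (map_mx conjc A)^T.

Definition psd {d} (A : 'M[C]_d) : Prop :=
  forall v : 'cV[C]_d, 0 <= (adjmx v *m A *m v) 0 0.

Definition density {d} (rho : 'M[C]_d) : Prop := psd rho /\ \tr rho = 1.

(* tensor product of two maps on operators, defined on the matrix-unit basis
   and extended linearly *)
Definition map_tens {a1 b1 a2 b2}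
  (f : 'M[C]_a1 -> 'M[C]_b1) (g : 'M[C]_a2 -> 'M[C]_b2)
  (X : 'M[C]_(a1 * a2)) : 'M[C]_(b1 * b2) :=
  \sum_(i < a1) \sum_(j < a1) \sum_(k < a2) \sum_(l < a2)
     X (mxtens_index (i, k)) (mxtens_index (j, l)) *:
       tensmx (f (delta_mx i j)) (g (delta_mx k l)).

Definition is_linear_map {a b} (f : 'M[C]_a -> 'M[C]_b) : Prop :=
  forall (c : C) (X Y : 'M[C]_a), f (c *: X + Y) = c *: f X + f Y.

Definition completely_positive {a b} (f : 'M[C]_a -> 'M[C]_b) : Prop :=
  forall (m : nat) (X : 'M[C]_(m * a)),
    psd X -> psd (map_tens (@id 'M[C]_m) f X).

Definition trace_preserving {a b} (f : 'M[C]_a -> 'M[C]_b) : Prop :=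
  forall X : 'M[C]_a, \tr (f X) = \tr X.

Definition CPTP {a b} (f : 'M[C]_a -> 'M[C]_b) : Prop :=
  [/\ is_linear_map f, completely_positive f & trace_preserving f].

Definition proj_family {d} {O : finType} (P : O -> 'M[C]_d) : Prop :=
  [/\ forall b, adjmx (P b) = P b,
      forall b b', P b *m P b' = if b == b' then P b else 0
    & \sum_(b : O) P b = 1%:M].

(* A multi-time process with n steps t_0 < ... < t_n: Hilbert space dimension
   dim k and outcome set Out k at time t_k, initial state rho, channels
   chan k : t_k -> t_{k+1} (k < n), and projectors proj k at time t_k (k <= n). *)
Record process (n : nat) := Process {
  dim : nat -> nat;
  Out : nat -> finType;
  rho : 'M[C]_(dim 0);
  chan : forall k, 'M[C]_(dim k) -> 'M[C]_(dim k.+1);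
  proj : forall k, Out k -> 'M[C]_(dim k)
}.
Arguments dim {n} p k.
Arguments Out {n} p k.
Arguments rho {n} p.
Arguments chan {n} p k _.
Arguments proj {n} p k _.

Definition is_process n (P : process n) : Prop :=
  [/\ density (rho P),
      forall k, (k < n)%N -> CPTP (chan P k)
    & forall k, (k <= n)%N -> proj_family (proj P k)].

(* outcome sequences (b_0, ..., b_k), as nested pairs *)
Fixpoint outs (O : nat -> finType) (k : nat) : finType :=
  match k with
  | 0 => O 0
  | k'.+1 => (outs O k' * O k'.+1)%type
  end.

Unset Implicit Arguments.
Section KD.
Variables (n : nat) (P : process n).
Local Notation d := (dim P).
Local Notation E := (chan P).
Local Notation Pi := (proj P).

Fixpoint fwd_op (k : nat) : outs (Out P) k -> 'M[C]_(d k) :=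
  match k return outs (Out P) k -> 'M[C]_(d k) with
  | 0 => fun b => rho P *m Pi 0%N b
  | k'.+1 => fun bb => E k' (fwd_op k' bb.1) *m Pi k'.+1 bb.2
  end.

Fixpoint bwd_op (k : nat) : outs (Out P) k -> 'M[C]_(d k) :=
  match k return outs (Out P) k -> 'M[C]_(d k) with
  | 0 => fun a => Pi 0%N a *m rho P
  | k'.+1 => fun aa => Pi k'.+1 aa.2 *m E k' (bwd_op k' aa.1)
  end.

Fixpoint dbl_op (k : nat) : outs (Out P) k -> outs (Out P) k -> 'M[C]_(d k) :=
  match k return outs (Out P) k -> outs (Out P) k -> 'M[C]_(d k) with
  | 0 => fun a b => Pi 0%N a *m rho P *m Pi 0%N b
  | k'.+1 => fun aa bb => Pi k'.+1 aa.2 *m E k' (dbl_op k' aa.1 bb.1) *m Pi k'.+1 bb.2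
  end.

Definition QKD_fwd (b : outs (Out P) n) : C := \tr (fwd_op n b).
Definition QKD_bwd (a : outs (Out P) n) : C := \tr (bwd_op n a).
Definition QKD_dbl (ab : outs (Out P) n * outs (Out P) n) : C :=
  \tr (dbl_op n ab.1 ab.2).
End KD.
Set Implicit Arguments.

Definition tens_process n (P1 P2 : process n) : process n :=
  @Process n (fun k : nat => (dim P1 k * dim P2 k)%N)
    (fun k => (Out P1 k * Out P2 k)%type)
    (tensmx (rho P1) (rho P2))
    (fun k => map_tens (chan P1 k) (chan P2 k))
    (fun k bc => tensmx (proj P1 k bc.1) (proj P2 k bc.2)).

Definition negativity {T : finType} (Q : T -> C) : R :=
  \sum_(t : T) Normc.normc (Q t) - 1.
Definition log_negativity {T : finType} (Q : T -> C) : R :=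
  ln (\sum_(t : T) Normc.normc (Q t)).

End QProc.

Arguments fwd_op {R n} P k _.
Arguments bwd_op {R n} P k _.
Arguments dbl_op {R n} P k _ _.
Arguments QKD_fwd {R n} P _.
Arguments QKD_bwd {R n} P _.
Arguments QKD_dbl {R n} P _.

(* The KD quasiprobabilities of the product process factorize: each KD operator
   of P1 (x) P2 is the Kronecker product of the corresponding operators of P1
   and P2, because [map_tens f g (X *t Y) = f X *t g Y] for linear f, g and the
   Kronecker product is multiplicative; the trace is multiplicative on
   Kronecker products too.  Hence [sum |Q12| = sum |Q1| * sum |Q2|], which gives
   both identities, the logarithmic one once [sum |Qi| > 0]: this holds because
   a KD distribution sums to 1 (complete projector families, trace-preserving
   channels). *)
From Pilot Require Import Defs.
From HB Require Import structures.
From mathcomp Require Import all_boot all_order all_algebra.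
From mathcomp Require Import reals exp.
From mathcomp.real_closed Require Import complex mxtens.
From mathcomp Require Import ring.
Import Order.TTheory GRing.Theory Num.Theory.
Local Open Scope ring_scope.
Set Implicit Arguments.
Unset Strict Implicit.

Section KroneckerProduct.
Variable R : comPzRingType.
Variables m n p q : nat.

Lemma tensmxDl (A A' : 'M[R]_(m, n)) (B : 'M[R]_(p, q)) :
  (A + A') *t B = A *t B + A' *t B.
Proof. by apply/matrixP=> i j; rewrite !mxE mulrDl. Qed.

Lemma tensmxDr (A : 'M[R]_(m, n)) (B B' : 'M[R]_(p, q)) :
  A *t (B + B') = A *t B + A *t B'.
Proof. by apply/matrixP=> i j; rewrite !mxE mulrDr. Qed.

Lemma tensmxZl c (A : 'M[R]_(m, n)) (B : 'M[R]_(p, q)) :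
  (c *: A) *t B = c *: (A *t B).
Proof. by apply/matrixP=> i j; rewrite !mxE mulrA. Qed.

Lemma tensmxZr c (A : 'M[R]_(m, n)) (B : 'M[R]_(p, q)) :
  A *t (c *: B) = c *: (A *t B).
Proof. by apply/matrixP=> i j; rewrite !mxE mulrCA. Qed.

Lemma tensmx_suml I (r : seq I) (F : I -> 'M[R]_(m, n)) (B : 'M[R]_(p, q)) :
  (\sum_(i <- r) F i) *t B = \sum_(i <- r) F i *t B.
Proof.
exact: (big_morph (fun A => A *t B) (fun A A' => tensmxDl A A' B) (tens0mx B)).
Qed.

Lemma tensmx_sumr I (r : seq I) (A : 'M[R]_(m, n)) (F : I -> 'M[R]_(p, q)) :
  A *t (\sum_(i <- r) F i) = \sum_(i <- r) A *t F i.
Proof. exact: (big_morph (tensmx A) (tensmxDr A) (tensmx0 A)). Qed.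

End KroneckerProduct.

Lemma mxtrace_tensmx (R : comPzRingType) m n (A : 'M[R]_m) (B : 'M[R]_n) :
  \tr (A *t B) = \tr A * \tr B.
Proof.
by rewrite /mxtrace mulr_sum; apply: eq_bigr => i _; rewrite !mxE.
Qed.

Section ProductSum.
Variable R : comPzSemiRingType.

Lemma sum_factor_bij (T1 T2 T : finType) (h : T1 * T2 -> T) (F : T -> R)
    (f1 : T1 -> R) (f2 : T2 -> R) :
  bijective h -> (forall x y, F (h (x, y)) = f1 x * f2 y) ->
  \sum_t F t = (\sum_x f1 x) * (\sum_y f2 y).
Proof.
move=> h_bij hF; rewrite (reindex h) /=; last exact: onW_bij.
rewrite (eq_bigr (fun p => f1 p.1 * f2 p.2)); last by case=> x y _; apply: hF.
rewrite -(pair_bigA _ (fun x y => f1 x * f2 y)) mulr_suml.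
by apply: eq_bigr => x _; rewrite mulr_sumr.
Qed.

End ProductSum.

Section TensorOfLinearMaps.
Variables (R : realType) (a1 b1 a2 b2 : nat).
Local Notation C := R[i].
Variables (f : 'M[C]_a1 -> 'M[C]_b1) (g : 'M[C]_a2 -> 'M[C]_b2).
Hypotheses (f_lin : is_linear_map f) (g_lin : is_linear_map g).

HB.instance Definition _ := GRing.isLinear.Build C _ _ *:%R f f_lin.
HB.instance Definition _ := GRing.isLinear.Build C _ _ *:%R g g_lin.

Lemma map_tens_tensmx X Y : map_tens f g (X *t Y) = f X *t g Y.
Proof.
rewrite /map_tens {2}(matrix_sum_delta X) {2}(matrix_sum_delta Y).
rewrite raddf_sum tensmx_suml; apply: eq_bigr => i _.
rewrite raddf_sum tensmx_suml; apply: eq_bigr => j _.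
rewrite raddf_sum tensmx_sumr; apply: eq_bigr => k _.
rewrite raddf_sum tensmx_sumr; apply: eq_bigr => l _.
by rewrite tensmxE /= !linearZ tensmxZl tensmxZr scalerA mulrC.
Qed.

End TensorOfLinearMaps.

Section OutcomeZip.
Variables O1 O2 : nat -> finType.
Local Notation O12 := (fun k => (O1 k * O2 k)%type).

Fixpoint outs_zip k : outs O1 k * outs O2 k -> outs O12 k :=
  match k return outs O1 k * outs O2 k -> outs O12 k with
  | 0 => id
  | k'.+1 => fun bc => (outs_zip (bc.1.1, bc.2.1), (bc.1.2, bc.2.2))
  end.

Fixpoint outs_unzip k : outs O12 k -> outs O1 k * outs O2 k :=
  match k return outs O12 k -> outs O1 k * outs O2 k with
  | 0 => id
  | k'.+1 => fun bc =>
      let: (b, c) := outs_unzip bc.1 in ((b, bc.2.1), (c, bc.2.2))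
  end.

Lemma outs_zipK k : cancel (@outs_zip k) (@outs_unzip k).
Proof. by elim: k => [|k IH] // [[b b'] [c c']] /=; rewrite IH. Qed.

Lemma outs_unzipK k : cancel (@outs_unzip k) (@outs_zip k).
Proof.
elim: k => [|k IH] // [bc [b' c']] /=.
by rewrite -[in RHS](IH bc); case: (outs_unzip bc).
Qed.

Lemma outs_zip_bij k : bijective (@outs_zip k).
Proof. exact: Bijective (@outs_zipK k) (@outs_unzipK k). Qed.

Lemma outs_zip2_bij k :
  bijective (fun p : (outs O1 k * outs O1 k) * (outs O2 k * outs O2 k) =>
               (outs_zip (p.1.1, p.2.1), outs_zip (p.1.2, p.2.2))).
Proof.
exists (fun t => let: (a1, a2) := outs_unzip t.1 in
                 let: (b1, b2) := outs_unzip t.2 in ((a1, b1), (a2, b2))).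
  by move=> [[a1 b1] [a2 b2]] /=; rewrite !outs_zipK.
move=> [a b] /=; rewrite -[in RHS](outs_unzipK a) -[in RHS](outs_unzipK b).
by case: (outs_unzip a) => a1 a2; case: (outs_unzip b).
Qed.

End OutcomeZip.

Lemma process_chan_linear R n (P : process R n) k :
  is_process P -> (k < n)%N -> is_linear_map (@chan _ _ P k).
Proof. by move=> [_ + _] kn => /(_ k kn) []. Qed.

Section ProductProcess.
Variables (R : realType) (n : nat) (P1 P2 : process R n).
Hypotheses (P1_lin : forall k, (k < n)%N -> is_linear_map (@chan _ _ P1 k))
           (P2_lin : forall k, (k < n)%N -> is_linear_map (@chan _ _ P2 k)).
Local Notation P12 := (tens_process P1 P2).
Local Notation zip := (@outs_zip (Out P1) (Out P2) _).

Lemma fwd_op_tens k b c : (k <= n)%N ->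
  fwd_op P12 k (zip (b, c)) = fwd_op P1 k b *t fwd_op P2 k c.
Proof.
elim: k b c => [|k IH] b c kn /=; first by rewrite !tensmx_mul.
by rewrite IH ?(ltnW kn) // (map_tens_tensmx (P1_lin kn) (P2_lin kn)) !tensmx_mul.
Qed.

Lemma bwd_op_tens k b c : (k <= n)%N ->
  bwd_op P12 k (zip (b, c)) = bwd_op P1 k b *t bwd_op P2 k c.
Proof.
elim: k b c => [|k IH] b c kn /=; first by rewrite !tensmx_mul.
by rewrite IH ?(ltnW kn) // (map_tens_tensmx (P1_lin kn) (P2_lin kn)) !tensmx_mul.
Qed.

Lemma dbl_op_tens k a1 b1 a2 b2 : (k <= n)%N ->
  dbl_op P12 k (zip (a1, a2)) (zip (b1, b2)) =
  dbl_op P1 k a1 b1 *t dbl_op P2 k a2 b2.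
Proof.
elim: k a1 b1 a2 b2 => [|k IH] a1 b1 a2 b2 kn /=; first by rewrite !tensmx_mul.
by rewrite IH ?(ltnW kn) // (map_tens_tensmx (P1_lin kn) (P2_lin kn)) !tensmx_mul.
Qed.

Lemma QKD_fwd_tens b c : QKD_fwd P12 (zip (b, c)) = QKD_fwd P1 b * QKD_fwd P2 c.
Proof. by rewrite /QKD_fwd fwd_op_tens // mxtrace_tensmx. Qed.

Lemma QKD_bwd_tens b c : QKD_bwd P12 (zip (b, c)) = QKD_bwd P1 b * QKD_bwd P2 c.
Proof. by rewrite /QKD_bwd bwd_op_tens // mxtrace_tensmx. Qed.

Lemma QKD_dbl_tens ab1 ab2 :
  QKD_dbl P12 (zip (ab1.1, ab2.1), zip (ab1.2, ab2.2)) =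
  QKD_dbl P1 ab1 * QKD_dbl P2 ab2.
Proof. by rewrite /QKD_dbl dbl_op_tens // mxtrace_tensmx. Qed.

End ProductProcess.

Section Normalization.
Variables (R : realType) (n : nat) (P : process R n).
Hypothesis P_proc : is_process P.

Lemma process_tr_rho : \tr (rho P) = 1.
Proof. by case: P_proc => -[]. Qed.

Lemma process_tr_chan k X : (k < n)%N -> \tr (@chan _ _ P k X) = \tr X.
Proof. by move=> kn; case: P_proc => _ /(_ k kn) []. Qed.

Lemma process_mulmx_proj_sumr k m (X : 'M[R[i]]_(m, Defs.dim P k)) : (k <= n)%N ->
  \sum_b X *m @proj _ _ P k b = X.
Proof.
by move=> kn; case: P_proc => _ _ /(_ k kn) [_ _ sum1]; rewrite -mulmx_sumr sum1 mulmx1.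
Qed.

Lemma process_mulmx_proj_suml k m (X : 'M[R[i]]_(Defs.dim P k, m)) : (k <= n)%N ->
  \sum_b @proj _ _ P k b *m X = X.
Proof.
by move=> kn; case: P_proc => _ _ /(_ k kn) [_ _ sum1]; rewrite -mulmx_suml sum1 mul1mx.
Qed.

Lemma sum_tr_fwd_op k : (k <= n)%N -> \sum_b \tr (fwd_op P k b) = 1.
Proof.
elim: k => [|k IH] kn.
  by rewrite -raddf_sum process_mulmx_proj_sumr //; apply: process_tr_rho.
rewrite -(pair_bigA _ (fun b b' => \tr (fwd_op P k.+1 (b, b')))) -IH ?(ltnW kn) //.
apply: eq_bigr => b _.
by rewrite -raddf_sum /= process_mulmx_proj_sumr //; apply: process_tr_chan.
Qed.

Lemma sum_tr_bwd_op k : (k <= n)%N -> \sum_b \tr (bwd_op P k b) = 1.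
Proof.
elim: k => [|k IH] kn.
  by rewrite -raddf_sum process_mulmx_proj_suml //; apply: process_tr_rho.
rewrite -(pair_bigA _ (fun b b' => \tr (bwd_op P k.+1 (b, b')))) -IH ?(ltnW kn) //.
apply: eq_bigr => b _.
by rewrite -raddf_sum /= process_mulmx_proj_suml //; apply: process_tr_chan.
Qed.

Lemma process_proj_sandwich k (X : 'M[R[i]]_(Defs.dim P k)) : (k <= n)%N ->
  \sum_a \sum_b @proj _ _ P k a *m X *m @proj _ _ P k b = X.
Proof.
move=> kn; under eq_bigr do rewrite process_mulmx_proj_sumr //.
exact: process_mulmx_proj_suml.
Qed.

Lemma sum_tr_dbl_op k : (k <= n)%N -> \sum_a \sum_b \tr (dbl_op P k a b) = 1.
Proof.
elim: k => [|k IH] kn.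
  under eq_bigr do rewrite -raddf_sum.
  by rewrite -raddf_sum process_proj_sandwich //; apply: process_tr_rho.
rewrite -(pair_bigA _ (fun a a' => \sum_b \tr (dbl_op P k.+1 (a, a') b))).
rewrite -IH ?(ltnW kn) //; apply: eq_bigr => a _.
under eq_bigr do rewrite -(pair_bigA _ (fun b b' => \tr (dbl_op P k.+1 (a, _) (b, b')))).
rewrite exchange_big; apply: eq_bigr => b _.
under eq_bigr do rewrite -raddf_sum.
by rewrite -raddf_sum /= process_proj_sandwich //; apply: process_tr_chan.
Qed.

Lemma sum_QKD_fwd : \sum_b QKD_fwd P b = 1.
Proof. exact: sum_tr_fwd_op. Qed.

Lemma sum_QKD_bwd : \sum_a QKD_bwd P a = 1.
Proof. exact: sum_tr_bwd_op. Qed.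

Lemma sum_QKD_dbl : \sum_ab QKD_dbl P ab = 1.
Proof. by rewrite -(pair_bigA _ (fun a b => QKD_dbl P (a, b))); apply: sum_tr_dbl_op. Qed.

End Normalization.

Section Negativity.
Variable R : realType.
Local Notation normc := (@Normc.normc R).

Lemma sum_normc_factor (T1 T2 T : finType) (h : T1 * T2 -> T)
    (Q1 : T1 -> R[i]) (Q2 : T2 -> R[i]) (Q : T -> R[i]) :
  bijective h -> (forall x y, Q (h (x, y)) = Q1 x * Q2 y) ->
  \sum_t normc (Q t) = (\sum_x normc (Q1 x)) * (\sum_y normc (Q2 y)).
Proof.
by move=> h_bij hQ; apply: (sum_factor_bij h_bij) => x y; rewrite hQ Normc.normcM.
Qed.

Lemma sum_normc_ge1 (T : finType) (Q : T -> R[i]) :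
  \sum_t Q t = 1 -> 1 <= \sum_t normc (Q t).
Proof.
move=> sumQ; rewrite -Normc.normc1 -sumQ.
elim/big_ind2: _ => [|x1 x2 y1 y2 le1 le2|//]; first by rewrite Normc.normc0.
by apply: le_trans (le_normcD _ _) _; apply: lerD.
Qed.

Lemma negativity_mul (T1 T2 T : finType)
    (Q1 : T1 -> R[i]) (Q2 : T2 -> R[i]) (Q : T -> R[i]) :
  \sum_t normc (Q t) = (\sum_x normc (Q1 x)) * (\sum_y normc (Q2 y)) ->
  negativity Q = negativity Q1 * negativity Q2 + negativity Q1 + negativity Q2.
Proof. by rewrite /negativity => ->; ring. Qed.

Lemma log_negativity_mul (T1 T2 T : finType)
    (Q1 : T1 -> R[i]) (Q2 : T2 -> R[i]) (Q : T -> R[i]) :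
  \sum_x Q1 x = 1 -> \sum_y Q2 y = 1 ->
  \sum_t normc (Q t) = (\sum_x normc (Q1 x)) * (\sum_y normc (Q2 y)) ->
  log_negativity Q = log_negativity Q1 + log_negativity Q2.
Proof.
move=> /sum_normc_ge1 ge1 /sum_normc_ge1 ge2; rewrite /log_negativity => ->.
by apply: lnM; rewrite posrE (lt_le_trans ltr01).
Qed.

End Negativity.

Theorem mainTheorem10 (R : realType) (n : nat) (P1 P2 : process R n) :
  is_process P1 -> is_process P2 ->
  let P12 := tens_process P1 P2 in
  (* right (forward) KD distribution *)
  (negativity (QKD_fwd P12) =
     negativity (QKD_fwd P1) * negativity (QKD_fwd P2)
     + negativity (QKD_fwd P1) + negativity (QKD_fwd P2)
   /\ log_negativity (QKD_fwd P12) =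
     log_negativity (QKD_fwd P1) + log_negativity (QKD_fwd P2)) /\
  (* left (backward) KD distribution *)
  (negativity (QKD_bwd P12) =
     negativity (QKD_bwd P1) * negativity (QKD_bwd P2)
     + negativity (QKD_bwd P1) + negativity (QKD_bwd P2)
   /\ log_negativity (QKD_bwd P12) =
     log_negativity (QKD_bwd P1) + log_negativity (QKD_bwd P2)) /\
  (* doubled KD distribution *)
  (negativity (QKD_dbl P12) =
     negativity (QKD_dbl P1) * negativity (QKD_dbl P2)
     + negativity (QKD_dbl P1) + negativity (QKD_dbl P2)
   /\ log_negativity (QKD_dbl P12) =
     log_negativity (QKD_dbl P1) + log_negativity (QKD_dbl P2)).
Proof.
move=> P1_proc P2_proc P12.
have lin1 k := @process_chan_linear _ _ P1 k P1_proc.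
have lin2 k := @process_chan_linear _ _ P2 k P2_proc.
have fwd := sum_normc_factor (outs_zip_bij _ _ n) (QKD_fwd_tens lin1 lin2).
have bwd := sum_normc_factor (outs_zip_bij _ _ n) (QKD_bwd_tens lin1 lin2).
have dbl := sum_normc_factor (outs_zip2_bij _ _ n) (QKD_dbl_tens lin1 lin2).
split; [|split]; split.
- exact: negativity_mul fwd.
- exact: log_negativity_mul (sum_QKD_fwd P1_proc) (sum_QKD_fwd P2_proc) fwd.
- exact: negativity_mul bwd.
- exact: log_negativity_mul (sum_QKD_bwd P1_proc) (sum_QKD_bwd P2_proc) bwd.
- exact: negativity_mul dbl.
- exact: log_negativity_mul (sum_QKD_dbl P1_proc) (sum_QKD_dbl P2_proc) dbl.
Qed.
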